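(* Let $N\ge2$, $a\in\mathbb R$, $\sigma\in\mathbb R^N$ with $\sigma_j\ge0$ for all $j$ and $\sum_{j=1}^N\sigma_j\le(N-1)/2$. Then there exist a sequence $(f_n)\subset G^{\sigma,a}$, each with finitely many nonzero Fourier coefficients, and a function $\varphi\in C_c^\infty(\mathbb R)$ such that: (i) $\sup_n\|f_n\|_{G^{\sigma,a}}<\infty$; (ii) $\sum_{k\in\dot{\mathbb Z}^N}\hat f_n(k)\varphi(\alpha\cdot k)\to\infty$ as $n\to\infty$. The sum in (ii) is the pairing $\langle\mathcal F_x[f_n],\varphi\rangle$, where $\mathcal F_x[f_n]=\sum_k\hat f_n(k)\delta_{\alpha\cdot k}$. In particular, the series defining elements of $G^{\sigma,a}$ need not converge in $\mathcal S'(\mathbb R)$.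
   Context: Standing setting: fix $N$ and $\alpha\in\mathbb R^N$ with $\alpha\cdot k\neq0$ for all $k\in\dot{\mathbb Z}^N:=\mathbb Z^N\setminus\{0\}$. Write $\langle x\rangle=(1+|x|^2)^{1/2}$. $G^{\sigma,a}$ is the space of series $f=\sum_{k\in\dot{\mathbb Z}^N}\hat f(k)e^{i(\alpha\cdot k)x}$ with $$\|f\|_{G^{\sigma,a}}=\Big(\sum_k|\alpha\cdot k|^{2a}\prod_j\langle k_j\rangle^{2\sigma_j}|\hat f(k)|^2\Big)^{1/2}<\infty.$$ *)

From Stdlib Require Import Reals Lra Lia ZArith List.
Open Scope R_scope.

Definition lsum {A : Type} (g : A -> R) (l : list A) : R :=
  fold_right (fun x acc => g x + acc) 0 l.

Definition lprod {A : Type} (g : A -> R) (l : list A) : R :=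
  fold_right (fun x acc => g x * acc) 1 l.

(* Lattice points k in Z^N are lists of length N; alpha, sigma in R^N are
   lists of length N. *)
Definition dotZ (alpha : list R) (k : list Z) : R :=
  lsum (fun p => fst p * IZR (snd p)) (combine alpha k).

Definition dotZN (N : nat) (k : list Z) : Prop :=
  length k = N /\ k <> repeat 0%Z N.

(* Complex numbers as pairs (real part, imaginary part). *)
Definition Cplx := (R * R)%type.
Definition Cnorm2 (z : Cplx) : R := fst z * fst z + snd z * snd z.

(* prod_j <k_j>^{2 sigma_j}, with <x> = (1+x^2)^{1/2}, so <x>^{2s} = (1+x^2)^s *)
Definition weight (sigma : list R) (k : list Z) : R :=
  lprod (fun p => Rpower (1 + IZR (snd p) ^ 2) (fst p)) (combine sigma k).

(* Squared G^{sigma,a} norm of a finitely supported coefficient function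
   fhat whose support is contained in the duplicate-free list S of points
   of \dot Z^N. *)
Definition Gnorm2 (alpha sigma : list R) (a : R) (S : list (list Z))
    (fhat : list Z -> Cplx) : R :=
  lsum (fun k => Rpower (Rabs (dotZ alpha k)) (2 * a) * weight sigma k
                 * Cnorm2 (fhat k)) S.

Definition pairing (alpha : list R) (S : list (list Z))
    (fhat : list Z -> Cplx) (phi : R -> R) : Cplx :=
  (lsum (fun k => fst (fhat k) * phi (dotZ alpha k)) S,
   lsum (fun k => snd (fhat k) * phi (dotZ alpha k)) S).

Definition smooth (phi : R -> R) : Prop :=
  exists D : nat -> R -> R, D 0%nat = phi /\
    forall m x, derivable_pt_lim (D m) x (D (S m) x).

Definition compact_support (phi : R -> R) : Prop :=
  exists R0, forall x, R0 < Rabs x -> phi x = 0.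

(* For a finite set S of lattice points, weights
   w(k) = |alpha . k|^(2a) prod_j <k_j>^(2 sigma_j) and values v(k) = phi(alpha . k),
   the coefficients f(k) = v(k) / (w(k) sqrt T), with T = sum_S v^2 / w, have
   G^{sigma,a}-norm 1 and pairing sqrt T.  It therefore suffices to find sets S_n on
   which T_n -> infinity.  Write alpha = (b, al) with b <> 0.  For each dyadic scale
   2^j and each d in the cube [2^j, 2^(j+1))^(N-1), choose the first coordinate z so
   that alpha . (z, d) lies in [|b|, 3|b|].  All entries of these 2^(j (N-1)) points
   are O(2^j), so their weights are O(2^(j (N-1))) exactly because sum_j sigma_j
   <= (N - 1) / 2, while phi(alpha . k) is bounded below for a bump phi positive on
   [|b|, 3|b|].  Hence each scale contributes a fixed c > 0 to T, and the union S_n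
   of the scales 0..n has T_n >= (n + 1) c. *)

From Stdlib Require Import Reals Lra Lia ZArith List FinFun.
From Coquelicot Require Import Coquelicot.
Open Scope R_scope.

Lemma lsum_app {A} (g : A -> R) l1 l2 : lsum g (l1 ++ l2) = lsum g l1 + lsum g l2.
Proof. induction l1 as [|x l1 IH]; simpl; [ring|]. unfold lsum in *; simpl; rewrite IH; ring. Qed.

Lemma lsum_flat_map {A B} (g : B -> R) (f : A -> list B) l :
  lsum g (flat_map f l) = lsum (fun x => lsum g (f x)) l.
Proof. induction l as [|x l IH]; simpl; [reflexivity|]. rewrite lsum_app, IH; reflexivity. Qed.

Lemma lsum_map {A B} (g : B -> R) (f : A -> B) l :
  lsum g (map f l) = lsum (fun x => g (f x)) l.
Proof. induction l as [|x l IH]; simpl; [reflexivity|]. unfold lsum in *; simpl; rewrite IH; reflexivity. Qed.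

Lemma lsum_ext_in {A} (g h : A -> R) l :
  (forall x, In x l -> g x = h x) -> lsum g l = lsum h l.
Proof.
  induction l as [|x l IH]; intro H; simpl; [reflexivity|]. unfold lsum in *; simpl.
  rewrite H by (left; auto). rewrite IH; [reflexivity|]. intros; apply H; right; auto.
Qed.

Lemma lsum_scal {A} (g : A -> R) l c : lsum (fun x => g x * c) l = lsum g l * c.
Proof. induction l as [|x l IH]; unfold lsum in *; simpl; [ring|]. rewrite IH; ring. Qed.

Lemma lsum_zero {A} (l : list A) : lsum (fun _ => 0) l = 0.
Proof. induction l as [|x l IH]; unfold lsum in *; simpl; [ring|]. rewrite IH; ring. Qed.

Lemma lsum_ge {A} (g : A -> R) l c :
  (forall x, In x l -> c <= g x) -> INR (length l) * c <= lsum g l.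
Proof.
  induction l as [|x l IH]; intro H; unfold lsum in *; cbn [length fold_right]; [simpl; lra|].
  rewrite S_INR. assert (c <= g x) by (apply H; left; auto).
  assert (INR (length l) * c <= fold_right (fun x acc => g x + acc) 0 l)
    by (apply IH; intros; apply H; right; auto).
  lra.
Qed.

Lemma lsum_abs_nonneg (l : list R) : 0 <= lsum Rabs l.
Proof. induction l as [|x l IH]; unfold lsum in *; simpl; [lra|]. pose proof (Rabs_pos x); lra. Qed.

(** * Polynomials as coefficient lists, constant term first *)

Fixpoint peval (p : list R) (x : R) : R :=
  match p with nil => 0 | c :: p' => c + x * peval p' x end.

Fixpoint padd (p q : list R) : list R :=
  match p, q with
  | nil, _ => q
  | _, nil => p
  | c :: p', d :: q' => (c + d) :: padd p' q'
  end.

Definition pscale (c : R) (p : list R) : list R := map (Rmult c) p.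

Fixpoint pmul (p q : list R) : list R :=
  match p with nil => nil | c :: p' => padd (pscale c q) (0 :: pmul p' q) end.

(* Formal derivative: (c + x p)' = p + x p'. *)
Fixpoint pder (p : list R) : list R :=
  match p with nil => nil | _ :: p' => padd p' (0 :: pder p') end.

(* Sum of the absolute values of the coefficients: a bound on [-1, 1]. *)
Fixpoint sumabs (p : list R) : R :=
  match p with nil => 0 | c :: p' => Rabs c + sumabs p' end.

Lemma peval_add p q x : peval (padd p q) x = peval p x + peval q x.
Proof. revert q; induction p as [|c p IH]; intros [|d q]; simpl; try ring. rewrite IH; ring. Qed.

Lemma peval_scale c p x : peval (pscale c p) x = c * peval p x.
Proof. unfold pscale; induction p as [|d p IH]; simpl; [ring|]. rewrite IH; ring. Qed.

Lemma peval_mul p q x : peval (pmul p q) x = peval p x * peval q x.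
Proof.
  induction p as [|c p IH]; simpl; [ring|].
  rewrite peval_add, peval_scale; simpl; rewrite IH; ring.
Qed.

Lemma peval_der p x : is_derive (peval p) x (peval (pder p) x).
Proof.
  induction p as [|c p IH]; simpl; [apply (is_derive_const 0)|].
  rewrite peval_add; simpl.
  change (is_derive (fun y => c + y * peval p y) x (peval p x + (0 + x * peval (pder p) x))).
  auto_derive; [exists (peval (pder p) x); exact IH|].
  replace (Derive (fun y => peval p y) x) with (peval (pder p) x)
    by (symmetry; apply is_derive_unique; exact IH).
  ring.
Qed.

Lemma sumabs_nonneg p : 0 <= sumabs p.
Proof. induction p as [|c p IH]; simpl; [lra|]. pose proof (Rabs_pos c); lra. Qed.

Lemma peval_bound p x : Rabs x <= 1 -> Rabs (peval p x) <= sumabs p.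
Proof.
  intro Hx; induction p as [|c p IH]; simpl; [rewrite Rabs_R0; lra|].
  eapply Rle_trans; [apply Rabs_triang|]. apply Rplus_le_compat_l.
  rewrite Rabs_mult. pose proof (Rabs_pos (peval p x)). pose proof (Rabs_pos x). nra.
Qed.

(** * A smooth bump supported in [0, 1] *)

(* The bump is exp(-1/h(x)) on (0, 1), where h(x) = x (1 - x), and 0 elsewhere.
   Its m-th derivative on (0, 1) is P_m(x) h(x)^(-2m) exp(-1/h(x)). *)
Definition hump (x : R) : R := x - x * x.

Definition hump_poly : list R := 0 :: 1 :: (-1) :: nil.
Definition hump_der_poly : list R := 1 :: (-2) :: nil.

Fixpoint bump_poly (m : nat) : list R :=
  match m with
  | O => 1 :: nil
  | S m' => padd (padd (pmul (pder (bump_poly m')) (pmul hump_poly hump_poly))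
                (pscale (- 2 * INR m') (pmul (bump_poly m') (pmul hump_der_poly hump_poly))))
                (pmul (bump_poly m') hump_der_poly)
  end.

Lemma bump_poly_S m x : peval (bump_poly (S m)) x =
  peval (pder (bump_poly m)) x * (hump x * hump x)
  - 2 * INR m * peval (bump_poly m) x * (1 - 2 * x) * hump x
  + peval (bump_poly m) x * (1 - 2 * x).
Proof.
  cbn [bump_poly]. rewrite !peval_add, peval_scale, !peval_mul.
  unfold hump; simpl; ring.
Qed.

Definition bump_formula (m : nat) (x : R) : R :=
  peval (bump_poly m) x * / hump x ^ (2 * m) * exp (- / hump x).

Lemma bump_formula_der m x :
  0 < hump x -> is_derive (bump_formula m) x (bump_formula (S m) x).
Proof.
  intro Hh. unfold bump_formula, hump in *.
  pose proof (peval_der (bump_poly m) x) as Hp.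
  auto_derive.
  - split; [exists (peval (pder (bump_poly m)) x); exact Hp|].
    replace (x + - (x * x)) with (x - x * x) by ring.
    split; [apply pow_nonzero; lra|]. split; [lra|exact I].
  - replace (Derive (fun y => peval (bump_poly m) y) x) with (peval (pder (bump_poly m)) x)
      by (symmetry; apply is_derive_unique; exact Hp).
    rewrite bump_poly_S. unfold hump.
    replace (x + - (x * x)) with (x - x * x) by ring.
    replace (m + (m + 0))%nat with (2 * m)%nat by lia.
    replace (2 * S m)%nat with (S (S (2 * m))) by lia.
    set (v := x - x * x) in *.
    assert (Hpred : INR (2 * m) * v ^ Init.Nat.pred (2 * m) = INR (2 * m) * v ^ (2 * m) / v).
    { destruct (2 * m)%nat; simpl; field; lra. }
    rewrite Hpred. simpl pow. clearbody v. rewrite mult_INR.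
    assert (v ^ (2 * m) <> 0) by (apply pow_nonzero; lra).
    set (A := v ^ (2 * m)) in *. simpl INR. field. split; [apply pow_nonzero|]; lra.
Qed.

Lemma exp_mul_nat n z : exp (INR n * z) = exp z ^ n.
Proof.
  induction n as [|n IH]; simpl pow; [rewrite Rmult_0_l, exp_0; ring|].
  rewrite S_INR, Rmult_plus_distr_r, Rmult_1_l, exp_plus, IH; ring.
Qed.

Lemma pow_exp_bound k y : 0 < y -> y ^ k * exp (- y) <= INR k ^ k.
Proof.
  intro Hy. rewrite exp_Ropp. pose proof (exp_pos y).
  destruct k as [|k].
  { simpl. assert (1 < exp y) by (rewrite <- exp_0; apply exp_increasing; lra).
    rewrite Rmult_1_l, <- Rinv_1. apply Rinv_le_contravar; lra. }
  set (n := INR (S k)).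
  assert (Hn : 0 < n) by (apply lt_0_INR; lia).
  assert (He : (y / n) ^ S k <= exp y).
  { replace (exp y) with (exp (y / n) ^ S k)
      by (rewrite <- exp_mul_nat; f_equal; change (INR (S k)) with n; field; lra).
    apply pow_incr. split.
    - apply Rlt_le, Rdiv_lt_0_compat; lra.
    - pose proof (exp_ineq1_le (y / n)). assert (0 < y / n) by (apply Rdiv_lt_0_compat; lra). lra. }
  unfold Rdiv in He. rewrite Rpow_mult_distr, pow_inv in He.
  assert (0 < n ^ S k) by (apply pow_lt; lra).
  apply (Rmult_le_reg_r (exp y)); [lra|].
  replace (y ^ S k * / exp y * exp y) with (y ^ S k) by (field; lra).
  apply (Rmult_le_reg_r (/ n ^ S k)); [apply Rinv_0_lt_compat; lra|].
  replace (n ^ S k * exp y * / n ^ S k) with (exp y) by (field; lra). exact He.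
Qed.

(* Flatness at the endpoints: every derivative is O(h(x)^2) on (0, 1). *)
Lemma bump_formula_flat m t : 0 < t < 1 ->
  Rabs (bump_formula m t) <=
    sumabs (bump_poly m) * INR (2 * m + 2) ^ (2 * m + 2) * hump t ^ 2.
Proof.
  intro Ht.
  assert (Hh : 0 < hump t) by (unfold hump; nra).
  set (y := / hump t).
  assert (Hy : 0 < y) by (apply Rinv_0_lt_compat; auto).
  assert (Hyh : hump t = / y) by (unfold y; rewrite Rinv_inv; reflexivity).
  pose proof (pow_exp_bound (2 * m + 2) y Hy) as Hb.
  pose proof (peval_bound (bump_poly m) t ltac:(rewrite Rabs_right; lra)) as Hp.
  unfold bump_formula. rewrite !Rabs_mult, Rabs_inv, <- RPow_abs.
  rewrite (Rabs_right (exp _)) by (left; apply exp_pos).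
  rewrite (Rabs_right (hump t)) by lra. fold y.
  rewrite Hyh, pow_inv, Rinv_inv.
  rewrite pow_add in Hb.
  assert (0 < y ^ (2 * m)) by (apply pow_lt; auto).
  assert (0 < exp (- y)) by apply exp_pos.
  assert (E : y ^ (2 * m) * exp (- y) * (/ y) ^ 2 * y ^ 2 = y ^ (2 * m) * exp (- y))
    by (field; lra).
  assert (Hc : y ^ (2 * m) * exp (- y) <= INR (2 * m + 2) ^ (2 * m + 2) * (/ y) ^ 2).
  { apply (Rmult_le_reg_r (y ^ 2)); [apply pow_lt; lra|].
    replace (INR (2 * m + 2) ^ (2 * m + 2) * (/ y) ^ 2 * y ^ 2)
      with (INR (2 * m + 2) ^ (2 * m + 2)) by (field; lra). nra. }
  pose proof (Rabs_pos (peval (bump_poly m) t)).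
  assert (0 <= INR (2 * m + 2) ^ (2 * m + 2) * (/ y) ^ 2)
    by (apply Rmult_le_pos; [apply pow_le, pos_INR|apply pow_le; left; apply Rinv_0_lt_compat; lra]).
  replace (sumabs (bump_poly m) * INR (2 * m + 2) ^ (2 * m + 2) * (/ y) ^ 2)
    with (sumabs (bump_poly m) * (INR (2 * m + 2) ^ (2 * m + 2) * (/ y) ^ 2)) by ring.
  rewrite Rmult_assoc. apply Rmult_le_compat; nra.
Qed.

Lemma derivable_pt_lim_quadratic (f : R -> R) x0 K :
  (forall h, Rabs h < 1 -> Rabs (f (x0 + h)) <= K * h ^ 2) ->
  derivable_pt_lim f x0 0.
Proof.
  intros Hf eps Heps.
  assert (H0 : f x0 = 0).
  { specialize (Hf 0). rewrite Rplus_0_r, Rabs_R0 in Hf.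
    pose proof (Rabs_pos (f x0)). apply Rabs_eq_0. simpl in Hf. lra. }
  assert (HK : 0 < Rabs K + 1) by (pose proof (Rabs_pos K); lra).
  assert (Hd : 0 < Rmin 1 (eps / (Rabs K + 1)))
    by (apply Rmin_pos; [lra|apply Rdiv_lt_0_compat; lra]).
  exists (mkposreal _ Hd). intros h Hh0 Hh. simpl in Hh.
  pose proof (Rmin_l 1 (eps / (Rabs K + 1))). pose proof (Rmin_r 1 (eps / (Rabs K + 1))).
  assert (Hha : 0 < Rabs h) by (apply Rabs_pos_lt; auto).
  specialize (Hf h ltac:(lra)).
  rewrite H0, Rminus_0_r, Rminus_0_r. unfold Rdiv. rewrite Rabs_mult, Rabs_inv.
  apply (Rmult_lt_reg_r (Rabs h)); [exact Hha|].
  replace (Rabs (f (x0 + h)) * / Rabs h * Rabs h) with (Rabs (f (x0 + h))) by (field; lra).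
  rewrite <- (pow2_abs h) in Hf.
  assert (Rabs K * Rabs h < eps).
  { apply Rle_lt_trans with ((Rabs K + 1) * Rabs h); [nra|].
    apply (Rmult_lt_reg_l (/ (Rabs K + 1))); [apply Rinv_0_lt_compat; lra|].
    replace (/ (Rabs K + 1) * ((Rabs K + 1) * Rabs h)) with (Rabs h) by (field; lra).
    replace (/ (Rabs K + 1) * eps) with (eps / (Rabs K + 1)) by (unfold Rdiv; ring). lra. }
  pose proof (Rle_abs K). nra.
Qed.

Definition bump_deriv (m : nat) (x : R) : R :=
  if Rlt_dec 0 x then if Rlt_dec x 1 then bump_formula m x else 0 else 0.

Lemma bump_deriv_out m x : x <= 0 \/ 1 <= x -> bump_deriv m x = 0.
Proof.
  intro H. unfold bump_deriv.
  destruct (Rlt_dec 0 x); [destruct (Rlt_dec x 1); [lra|]|]; reflexivity.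
Qed.

Lemma bump_deriv_in m x : 0 < x < 1 -> bump_deriv m x = bump_formula m x.
Proof.
  intro H. unfold bump_deriv.
  destruct (Rlt_dec 0 x); [destruct (Rlt_dec x 1)|]; [reflexivity|lra|lra].
Qed.

Lemma bump_deriv_endpoint m x0 : x0 = 0 \/ x0 = 1 ->
  derivable_pt_lim (bump_deriv m) x0 0.
Proof.
  intro Hx0.
  set (K := sumabs (bump_poly m) * INR (2 * m + 2) ^ (2 * m + 2)).
  assert (HK : 0 <= K)
    by (apply Rmult_le_pos; [apply sumabs_nonneg|apply pow_le, pos_INR]).
  apply (derivable_pt_lim_quadratic _ _ K). intros h Hh.
  destruct (Rlt_dec 0 (x0 + h)) as [H1|H1]; [destruct (Rlt_dec (x0 + h) 1) as [H2|H2]|].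
  - rewrite bump_deriv_in by lra.
    eapply Rle_trans; [apply bump_formula_flat; lra|]. fold K.
    apply Rmult_le_compat_l; [exact HK|].
    assert (0 < hump (x0 + h) <= Rabs h).
    { unfold hump. destruct Hx0; subst x0.
      - rewrite Rabs_right by lra. nra.
      - rewrite Rabs_left by lra. nra. }
    rewrite <- (pow2_abs h). apply pow_incr. lra.
  - rewrite bump_deriv_out, Rabs_R0 by lra. apply Rmult_le_pos; [exact HK|apply pow2_ge_0].
  - rewrite bump_deriv_out, Rabs_R0 by lra. apply Rmult_le_pos; [exact HK|apply pow2_ge_0].
Qed.

Lemma bump_deriv_der m x : derivable_pt_lim (bump_deriv m) x (bump_deriv (S m) x).
Proof.
  destruct (Rtotal_order x 0) as [Hx|[Hx|Hx]];
    [|subst x; rewrite bump_deriv_out by lra; apply bump_deriv_endpoint; auto|].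
  - rewrite bump_deriv_out by lra. apply is_derive_Reals.
    apply (is_derive_ext_loc (fun _ => 0)); [|auto_derive; auto].
    apply (locally_interval _ x m_infty 0); simpl; auto.
    intros y _ Hy. rewrite bump_deriv_out by lra. reflexivity.
  - destruct (Rtotal_order x 1) as [Hx1|[Hx1|Hx1]];
      [|subst x; rewrite bump_deriv_out by lra; apply bump_deriv_endpoint; auto|].
    + rewrite bump_deriv_in by lra. apply is_derive_Reals.
      apply (is_derive_ext_loc (bump_formula m)); [|apply bump_formula_der; unfold hump; nra].
      apply (locally_interval _ x 0 1); simpl; auto.
      intros y Hy1 Hy2. rewrite bump_deriv_in by (simpl in *; lra). reflexivity.
    + rewrite bump_deriv_out by lra. apply is_derive_Reals.
      apply (is_derive_ext_loc (fun _ => 0)); [|auto_derive; auto].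
      apply (locally_interval _ x 1 p_infty); simpl; auto.
      intros y Hy _. rewrite bump_deriv_out by (simpl in *; lra). reflexivity.
Qed.

Definition scaled_bump_deriv (B : R) (m : nat) (x : R) : R :=
  bump_deriv m (x / B) * (/ B) ^ m.

Definition scaled_bump (B : R) : R -> R := scaled_bump_deriv B 0.

Lemma scaled_bump_smooth B : B <> 0 -> smooth (scaled_bump B).
Proof.
  intro HB. exists (scaled_bump_deriv B). split; [reflexivity|].
  intros m x. unfold scaled_bump_deriv. apply is_derive_Reals.
  assert (Hd : is_derive (bump_deriv m) (x / B) (bump_deriv (S m) (x / B)))
    by apply is_derive_Reals, bump_deriv_der.
  auto_derive; [exists (bump_deriv (S m) (x / B)); exact Hd|].
  replace (Derive (fun y => bump_deriv m y) (x * / B)) with (bump_deriv (S m) (x / B))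
    by (symmetry; apply is_derive_unique; exact Hd).
  simpl. field; auto.
Qed.

Lemma scaled_bump_support B : 0 < B -> compact_support (scaled_bump B).
Proof.
  intro HB. exists B. intros x Hx.
  unfold scaled_bump, scaled_bump_deriv. rewrite bump_deriv_out; [ring|].
  destruct (Rcase_abs x); [rewrite Rabs_left in Hx by auto; left|rewrite Rabs_right in Hx by auto; right];
    apply (Rmult_le_reg_r B); auto; unfold Rdiv; rewrite Rmult_assoc, Rinv_l; lra.
Qed.

Lemma scaled_bump_lower B x : 0 < B -> B / 4 <= x <= 3 * B / 4 ->
  exp (- 16 / 3) <= scaled_bump B x.
Proof.
  intros HB Hx. unfold scaled_bump, scaled_bump_deriv. set (t := x / B).
  assert (Ht : 1 / 4 <= t <= 3 / 4).
  { unfold t. split; apply (Rmult_le_reg_r B); auto;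
      replace (x / B * B) with x by (field; lra); lra. }
  rewrite bump_deriv_in by lra. unfold bump_formula. simpl.
  assert (Hh : 3 / 16 <= hump t) by (unfold hump; nra).
  replace ((1 + t * 0) * / 1 * exp (- / hump t) * 1) with (exp (- / hump t)) by field.
  assert (/ hump t <= 16 / 3).
  { replace (16 / 3) with (/ (3 / 16)) by field. apply Rinv_le_contravar; lra. }
  destruct (Req_dec (- 16 / 3) (- / hump t)) as [E|E]; [rewrite E; lra|].
  left. apply exp_increasing. lra.
Qed.

Lemma dotZ_cons b al z d : dotZ (b :: al) (z :: d) = b * IZR z + dotZ al d.
Proof. reflexivity. Qed.

Lemma dotZ_repeat0 al n : dotZ al (repeat 0%Z n) = 0.
Proof.
  revert n; induction al as [|b al IH]; intros [|n]; try reflexivity.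
  simpl repeat. rewrite dotZ_cons, IH. ring.
Qed.

Lemma dotZ_bound al d X : 0 <= X -> (forall z, In z d -> Rabs (IZR z) <= X) ->
  Rabs (dotZ al d) <= lsum Rabs al * X.
Proof.
  revert d; induction al as [|b al IH]; intros d HX Hd.
  - unfold dotZ, lsum; simpl. rewrite Rabs_R0; lra.
  - destruct d as [|z d].
    + unfold dotZ, lsum; simpl. rewrite Rabs_R0.
      pose proof (lsum_abs_nonneg (b :: al)) as Hs. unfold lsum in Hs; simpl in Hs. nra.
    + rewrite dotZ_cons. eapply Rle_trans; [apply Rabs_triang|].
      rewrite Rabs_mult. unfold lsum at 1; simpl. fold (lsum Rabs al).
      assert (Rabs (IZR z) <= X) by (apply Hd; left; auto).
      assert (Rabs (dotZ al d) <= lsum Rabs al * X)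
        by (apply IH; auto; intros; apply Hd; right; auto).
      pose proof (Rabs_pos b). nra.
Qed.

Fixpoint box (dim : nat) (lo : Z) (cnt : nat) : list (list Z) :=
  match dim with
  | O => nil :: nil
  | S dim' => flat_map (fun i => map (cons (lo + Z.of_nat i)%Z) (box dim' lo cnt)) (seq 0 cnt)
  end.

Lemma box_length dim lo cnt : length (box dim lo cnt) = (cnt ^ dim)%nat.
Proof.
  induction dim as [|dim IH]; simpl; [reflexivity|].
  rewrite (flat_map_constant_length (c := (cnt ^ dim)%nat)), length_seq; [lia|].
  intros; rewrite length_map; auto.
Qed.

Lemma box_in dim lo cnt v : In v (box dim lo cnt) ->
  length v = dim /\ forall z, In z v -> (lo <= z < lo + Z.of_nat cnt)%Z.
Proof.
  revert v; induction dim as [|dim IH]; simpl; intros v Hv.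
  - destruct Hv as [Hv|[]]; subst; simpl; split; auto; intros z [].
  - apply in_flat_map in Hv. destruct Hv as [i [Hi Hv]]. apply in_map_iff in Hv.
    destruct Hv as [w [Hw Hw']]. subst v. apply IH in Hw'. destruct Hw' as [Hl Hz].
    apply in_seq in Hi. simpl. split; [lia|].
    intros z [Hz'|Hz']; [subst; lia|auto].
Qed.

Lemma NoDup_flat_map_disjoint {A B} (f : A -> list B) l :
  NoDup l -> (forall x, NoDup (f x)) ->
  (forall x y c, In x l -> In y l -> x <> y -> In c (f x) -> ~ In c (f y)) ->
  NoDup (flat_map f l).
Proof.
  induction l as [|x l IH]; intros Hl Hf Hd; simpl; [constructor|].
  inversion Hl; subst. apply NoDup_app; [apply Hf|apply IH; auto|].
  - intros x0 y c Hx Hy. apply Hd; right; auto.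
  - intros c Hc Hin. apply in_flat_map in Hin. destruct Hin as [y [Hy Hcy]].
    apply (Hd x y c); [left|right|intro; subst|..]; auto.
Qed.

Lemma box_nodup dim lo cnt : NoDup (box dim lo cnt).
Proof.
  induction dim as [|dim IH]; simpl; [repeat constructor; auto|].
  apply NoDup_flat_map_disjoint; [apply seq_NoDup| |].
  - intro i. apply Injective_map_NoDup; [intros x y H; inversion H; auto|exact IH].
  - intros x y c _ _ Hxy Hc Hc'. apply in_map_iff in Hc, Hc'.
    destruct Hc as [w [Hw _]]; destruct Hc' as [w' [Hw' _]]. subst c. inversion Hw'. lia.
Qed.

(* For alpha = (b, al) with b <> 0 and d in Z^(N-1), the first coordinate is chosen so
   that alpha . (z, d) lies in [|b|, 3|b|]. *)
Definition first_coord (b : R) (al : list R) (d : list Z) : Z :=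
  up ((2 * Rabs b - dotZ al d) / b).

Definition lattice_point (b : R) (al : list R) (d : list Z) : list Z :=
  first_coord b al d :: d.

Lemma lattice_point_dot b al d : b <> 0 ->
  Rabs b <= dotZ (b :: al) (lattice_point b al d) <= 3 * Rabs b.
Proof.
  intro Hb. unfold lattice_point, first_coord. rewrite dotZ_cons.
  set (y := (2 * Rabs b - dotZ al d) / b).
  destruct (archimed y) as [H1 H2].
  assert (Hy : b * y = 2 * Rabs b - dotZ al d) by (unfold y; field; auto).
  destruct (Rlt_or_le 0 b).
  - rewrite Rabs_right in * by lra. nra.
  - rewrite Rabs_left in * by lra. nra.
Qed.

Lemma first_coord_bound b al d : b <> 0 ->
  Rabs (IZR (first_coord b al d)) <= 3 + Rabs (dotZ al d) / Rabs b.
Proof.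
  intro Hb. unfold first_coord. set (y := (2 * Rabs b - dotZ al d) / b).
  destruct (archimed y) as [H1 H2].
  assert (Hab : 0 < Rabs b) by (apply Rabs_pos_lt; auto).
  assert (Hy : Rabs y <= 2 + Rabs (dotZ al d) / Rabs b).
  { unfold y, Rdiv. rewrite Rabs_mult, Rabs_inv.
    replace (2 + Rabs (dotZ al d) * / Rabs b)
      with ((2 * Rabs b + Rabs (dotZ al d)) * / Rabs b) by (field; lra).
    apply Rmult_le_compat_r; [left; apply Rinv_0_lt_compat; auto|].
    pose proof (Rabs_triang (2 * Rabs b) (- dotZ al d)) as T. rewrite Rabs_Ropp in T.
    rewrite (Rabs_right (2 * Rabs b)) in T by lra. unfold Rminus. lra. }
  assert (Rabs (IZR (up y)) <= Rabs y + 1).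
  { unfold Rabs at 1. destruct (Rcase_abs (IZR (up y)));
      pose proof (Rle_abs y); pose proof (Rle_abs (- y)); rewrite Rabs_Ropp in *; lra. }
  lra.
Qed.

Lemma lattice_point_entries b al dim M d : b <> 0 -> (1 <= M)%nat ->
  In d (box dim (Z.of_nat M) M) ->
  forall e, In e (lattice_point b al d) ->
    Rabs (IZR e) <= (3 + 2 * lsum Rabs al / Rabs b) * INR M.
Proof.
  intros Hb HM Hd e He.
  assert (Hab : 0 < Rabs b) by (apply Rabs_pos_lt; auto).
  assert (HMr : 1 <= INR M) by (apply (le_INR 1); auto).
  assert (HL := lsum_abs_nonneg al).
  assert (HLb : 0 <= lsum Rabs al / Rabs b)
    by (apply Rmult_le_pos; [lra|left; apply Rinv_0_lt_compat; lra]).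
  apply box_in in Hd. destruct Hd as [_ Hz].
  assert (Hd2 : forall z, In z d -> Rabs (IZR z) <= 2 * INR M).
  { intros z Hzd. specialize (Hz z Hzd). rewrite INR_IZR_INZ.
    assert (IZR (Z.of_nat M) <= IZR z) by (apply IZR_le; lia).
    assert (IZR z <= 2 * IZR (Z.of_nat M)) by (rewrite <- mult_IZR; apply IZR_le; lia).
    assert (1 <= IZR (Z.of_nat M)) by (rewrite <- INR_IZR_INZ; auto).
    rewrite Rabs_right; lra. }
  destruct He as [He|He]; [|apply Hd2 in He; nra].
  subst e. eapply Rle_trans; [apply first_coord_bound; auto|].
  assert (Rabs (dotZ al d) <= lsum Rabs al * (2 * INR M)) by (apply dotZ_bound; auto; lra).
  assert (Rabs (dotZ al d) / Rabs b <= lsum Rabs al / Rabs b * (2 * INR M)).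
  { unfold Rdiv.
    replace (lsum Rabs al * / Rabs b * (2 * INR M)) with (lsum Rabs al * (2 * INR M) * / Rabs b)
      by ring.
    apply Rmult_le_compat_r; [left; apply Rinv_0_lt_compat|]; lra. }
  nra.
Qed.

Definition scale_points (b : R) (al : list R) (dim j : nat) : list (list Z) :=
  map (lattice_point b al) (box dim (Z.of_nat (2 ^ j)) (2 ^ j)).

Definition test_points (b : R) (al : list R) (dim n : nat) : list (list Z) :=
  flat_map (scale_points b al dim) (seq 0 (S n)).

Lemma test_points_in b al dim n k : In k (test_points b al dim n) ->
  exists j d, k = lattice_point b al d /\ In d (box dim (Z.of_nat (2 ^ j)) (2 ^ j)).
Proof.
  unfold test_points, scale_points. intro H. apply in_flat_map in H.
  destruct H as [j [_ Hk]]. apply in_map_iff in Hk. destruct Hk as [d [Hd Hd']].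
  exists j, d. auto.
Qed.

Lemma test_points_nodup b al dim n : (1 <= dim)%nat -> NoDup (test_points b al dim n).
Proof.
  intro Hdim. apply NoDup_flat_map_disjoint; [apply seq_NoDup| |].
  - intro j. apply Injective_map_NoDup; [intros x y H; inversion H; auto|apply box_nodup].
  - intros i j k _ _ Hij Hi Hj. apply in_map_iff in Hi, Hj.
    destruct Hi as [d [Hd Hd']]. destruct Hj as [e [He He']].
    subst k. inversion He. subst e.
    apply box_in in Hd', He'. destruct Hd' as [Hl Hz]. destruct He' as [_ Hz'].
    destruct d as [|z d]; [simpl in Hl; lia|].
    specialize (Hz z (or_introl eq_refl)). specialize (Hz' z (or_introl eq_refl)).
    (* the scales are separated by the second coordinate, which lies in [2^j, 2^(j+1)) *)
    assert (Hsep : forall p q, (p < q)%nat -> (2 ^ p + 2 ^ p <= 2 ^ q)%nat).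
    { intros p q Hpq. replace (2 ^ p + 2 ^ p)%nat with (2 ^ S p)%nat by (simpl; lia).
      apply Nat.pow_le_mono_r; lia. }
    destruct (Nat.lt_trichotomy i j) as [Hlt|[Heq|Hgt]];
      [apply Hsep in Hlt; lia|auto|apply Hsep in Hgt; lia].
Qed.

Lemma test_points_nonzero b al dim n k : (1 <= dim)%nat ->
  In k (test_points b al dim n) -> dotZN (S dim) k.
Proof.
  intros Hdim Hk. apply test_points_in in Hk. destruct Hk as [j [d [Hk Hd]]]. subst k.
  apply box_in in Hd. destruct Hd as [Hl Hz]. split; [simpl; rewrite Hl; reflexivity|].
  destruct d as [|z d]; [simpl in Hl; lia|]. destruct dim as [|dim]; [lia|].
  specialize (Hz z (or_introl eq_refl)).
  assert (0 < 2 ^ j)%nat by (apply Nat.neq_0_lt_0, Nat.pow_nonzero; lia).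
  simpl. intro Heq; inversion Heq. lia.
Qed.

Definition lattice_weight (alpha sigma : list R) (a : R) (k : list Z) : R :=
  Rpower (Rabs (dotZ alpha k)) (2 * a) * weight sigma k.

Lemma weight_pos sigma k : 0 < weight sigma k.
Proof.
  unfold weight. generalize (combine sigma k). intro l.
  induction l as [|p l IH]; unfold lprod in *; cbn [fold_right]; [lra|].
  assert (0 < Rpower (1 + IZR (snd p) ^ 2) (fst p)) by (unfold Rpower; apply exp_pos). nra.
Qed.

Lemma lattice_weight_pos alpha sigma a k : 0 < lattice_weight alpha sigma a k.
Proof. apply Rmult_lt_0_compat; [unfold Rpower; apply exp_pos|apply weight_pos]. Qed.

Lemma weight_bound sigma k X : length sigma = length k -> (forall s, In s sigma -> 0 <= s) ->
  (forall z, In z k -> Rabs (IZR z) <= X) ->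
  weight sigma k <= Rpower (1 + X ^ 2) (lsum (fun s => s) sigma).
Proof.
  revert k; induction sigma as [|s sigma IH]; intros k Hl Hs Hk.
  - unfold weight, lprod, lsum; simpl. rewrite Rpower_O; [lra|nra].
  - destruct k as [|z k]; [simpl in Hl; lia|].
    change (weight (s :: sigma) (z :: k)) with (Rpower (1 + IZR z ^ 2) s * weight sigma k).
    change (lsum (fun s => s) (s :: sigma)) with (s + lsum (fun s => s) sigma).
    rewrite Rpower_plus.
    assert (H1 : Rpower (1 + IZR z ^ 2) s <= Rpower (1 + X ^ 2) s).
    { apply Rle_Rpower_l; [apply Hs; left; auto|].
      assert (Rabs (IZR z) <= X) by (apply Hk; left; auto).
      rewrite <- (pow2_abs (IZR z)). pose proof (Rabs_pos (IZR z)). nra. }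
    assert (H2 : weight sigma k <= Rpower (1 + X ^ 2) (lsum (fun s => s) sigma)).
    { apply IH; [simpl in Hl; lia|intros; apply Hs; right; auto|intros; apply Hk; right; auto]. }
    apply Rmult_le_compat; [unfold Rpower; left; apply exp_pos|left; apply weight_pos|exact H1|exact H2].
Qed.

Lemma rpower_half_bound C M n : 1 <= C -> 1 <= M ->
  Rpower (1 + (C * M) ^ 2) (INR n / 2) <= Rpower (2 * C ^ 2) (INR n / 2) * M ^ n.
Proof.
  intros HC HM. assert (Hh : 0 <= INR n / 2) by (pose proof (pos_INR n); lra).
  apply Rle_trans with (Rpower (2 * C ^ 2 * (M * M)) (INR n / 2)).
  { apply Rle_Rpower_l; auto. assert (1 <= C * M) by nra. split; nra. }
  rewrite <- Rpower_mult_distr by nra. apply Rmult_le_compat_l; [unfold Rpower; left; apply exp_pos|].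
  rewrite <- Rpower_mult_distr, <- Rpower_plus by lra.
  replace (INR n / 2 + INR n / 2) with (INR n) by field.
  rewrite Rpower_pow by lra. lra.
Qed.

Lemma rpower_band_bound b x a : b <> 0 -> Rabs b <= x <= 3 * Rabs b ->
  Rpower (Rabs x) (2 * a) <= exp (Rabs (2 * a) * (Rabs (ln (Rabs b)) + Rabs (ln (3 * Rabs b)))).
Proof.
  intros Hb Hx. assert (0 < Rabs b) by (apply Rabs_pos_lt; auto).
  rewrite Rabs_right by lra. unfold Rpower.
  assert (H1 : ln (Rabs b) <= ln x) by (apply ln_le; lra).
  assert (H2 : ln x <= ln (3 * Rabs b)) by (apply ln_le; lra).
  assert (H3 : Rabs (ln x) <= Rabs (ln (Rabs b)) + Rabs (ln (3 * Rabs b))).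
  { pose proof (Rle_abs (- ln (Rabs b))). pose proof (Rle_abs (ln (3 * Rabs b))).
    pose proof (Rabs_pos (ln (Rabs b))). pose proof (Rabs_pos (ln (3 * Rabs b))).
    rewrite Rabs_Ropp in *. unfold Rabs at 1. destruct (Rcase_abs (ln x)); lra. }
  assert (H4 : 2 * a * ln x <= Rabs (2 * a) * Rabs (ln x))
    by (rewrite <- Rabs_mult; apply Rle_abs).
  pose proof (Rabs_pos (2 * a)).
  destruct (Req_dec (2 * a * ln x) (Rabs (2 * a) * (Rabs (ln (Rabs b)) + Rabs (ln (3 * Rabs b)))))
    as [E|E]; [rewrite E; lra|].
  left. apply exp_increasing. nra.
Qed.

(** * Every dyadic scale contributes a fixed amount *)

(* The test function for alpha = (b, ...): a bump supported in [0, 4|b|],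
   bounded below on [|b|, 3|b|] where all the chosen points alpha . k lie. *)
Definition test_bump (b : R) : R -> R := scaled_bump (4 * Rabs b).

Definition dual_mass (alpha sigma : list R) (a : R) (phi : R -> R) (S : list (list Z)) : R :=
  lsum (fun k => phi (dotZ alpha k) ^ 2 / lattice_weight alpha sigma a k) S.

Section DyadicScales.

Variables (b : R) (al : list R) (dim : nat) (a : R) (sigma : list R).
Hypothesis Hb : b <> 0.
Hypothesis Hslen : length sigma = S dim.
Hypothesis Hsig : forall s, In s sigma -> 0 <= s.
Hypothesis Hsig_sum : lsum (fun s => s) sigma <= INR dim / 2.

(* On the cube [M, 2M)^dim the weight grows at most like M^dim: this is where the
   hypothesis sum_j sigma_j <= (N - 1) / 2 enters. *)
Lemma weight_dyadic_bound : exists K, 0 < K /\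
  forall M d, (1 <= M)%nat -> In d (box dim (Z.of_nat M) M) ->
    weight sigma (lattice_point b al d) <= K * INR M ^ dim.
Proof.
  set (C := 3 + 2 * lsum Rabs al / Rabs b).
  assert (HC : 1 <= C).
  { assert (0 < Rabs b) by (apply Rabs_pos_lt; auto). pose proof (lsum_abs_nonneg al).
    assert (0 <= lsum Rabs al / Rabs b)
      by (apply Rmult_le_pos; [lra|left; apply Rinv_0_lt_compat; lra]).
    unfold C; lra. }
  exists (Rpower (2 * C ^ 2) (INR dim / 2)). split; [unfold Rpower; apply exp_pos|].
  intros M d HM Hd. assert (HMr : 1 <= INR M) by (apply (le_INR 1); auto).
  eapply Rle_trans; [apply (weight_bound _ _ (C * INR M))|].
  - apply box_in in Hd. simpl. rewrite Hslen, (proj1 Hd). reflexivity.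
  - exact Hsig.
  - apply (lattice_point_entries b al dim M d); auto.
  - eapply Rle_trans; [apply Rle_Rpower; [nra|exact Hsig_sum]|].
    apply rpower_half_bound; auto.
Qed.

Lemma scale_term_lower_bound : exists c, 0 < c /\
  forall j d, In d (box dim (Z.of_nat (2 ^ j)) (2 ^ j)) ->
    c / INR (2 ^ j) ^ dim <=
    test_bump b (dotZ (b :: al) (lattice_point b al d)) ^ 2
      / lattice_weight (b :: al) sigma a (lattice_point b al d).
Proof.
  destruct weight_dyadic_bound as [K [HK HW]].
  set (A := exp (Rabs (2 * a) * (Rabs (ln (Rabs b)) + Rabs (ln (3 * Rabs b))))).
  set (p := exp (- 16 / 3) ^ 2).
  assert (HA : 0 < A) by apply exp_pos.
  assert (Hp : 0 < p) by apply pow_lt, exp_pos.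
  exists (p / (A * K)). split; [apply Rdiv_lt_0_compat; nra|].
  intros j d Hd. set (k := lattice_point b al d). set (x := dotZ (b :: al) k).
  assert (HM : (1 <= 2 ^ j)%nat) by (apply Nat.le_succ_l, Nat.neq_0_lt_0, Nat.pow_nonzero; lia).
  assert (HMr : 0 < INR (2 ^ j) ^ dim) by (apply pow_lt, lt_0_INR; lia).
  assert (Hx : Rabs b <= x <= 3 * Rabs b) by apply lattice_point_dot, Hb.
  assert (Hphi : p <= test_bump b x ^ 2).
  { assert (exp (- 16 / 3) <= test_bump b x)
      by (apply scaled_bump_lower; pose proof (Rabs_pos_lt b Hb); lra).
    pose proof (exp_pos (- 16 / 3)). unfold p. nra. }
  assert (Hw : lattice_weight (b :: al) sigma a k <= A * (K * INR (2 ^ j) ^ dim)).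
  { apply Rmult_le_compat; [unfold Rpower; left; apply exp_pos|left; apply weight_pos|
      apply rpower_band_bound; auto|apply HW; auto]. }
  pose proof (lattice_weight_pos (b :: al) sigma a k).
  apply Rle_trans with (p / (A * (K * INR (2 ^ j) ^ dim))).
  - right. field. repeat split; lra.
  - unfold Rdiv. apply Rmult_le_compat; [lra|left; apply Rinv_0_lt_compat; nra|exact Hphi|].
    apply Rinv_le_contravar; assumption.
Qed.

Lemma dual_mass_lower_bound : exists c, 0 < c /\
  forall n, INR (S n) * c <= dual_mass (b :: al) sigma a (test_bump b) (test_points b al dim n).
Proof.
  destruct scale_term_lower_bound as [c [Hc Hterm]].
  exists c. split; [exact Hc|]. intro n.
  unfold dual_mass, test_points. rewrite lsum_flat_map.
  replace (INR (S n)) with (INR (length (seq 0 (S n)))) by (rewrite length_seq; auto).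
  apply lsum_ge. intros j _. unfold scale_points. rewrite lsum_map.
  eapply Rle_trans; [|apply lsum_ge; intros d Hd; apply Hterm; exact Hd].
  rewrite box_length, pow_INR.
  assert (0 < INR (2 ^ j) ^ dim) by (apply pow_lt, lt_0_INR, Nat.neq_0_lt_0, Nat.pow_nonzero; lia).
  right. field. lra.
Qed.

End DyadicScales.

(** * Duality: normalized coefficients realizing the dual mass *)

(* On S, f(k) = v(k) / (w(k) sqrt T); this has weighted norm 1 and pairing sqrt T
   with v whenever T = sum_S v^2 / w. *)
Definition test_coef (S : list (list Z)) (w v : list Z -> R) (T : R) (k : list Z) : Cplx :=
  if in_dec (list_eq_dec Z.eq_dec) k S then (v k / w k / sqrt T, 0) else (0, 0).

Lemma test_coef_in S w v T k : In k S -> test_coef S w v T k = (v k / w k / sqrt T, 0).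
Proof. intro Hk. unfold test_coef. destruct (in_dec _ k S); [reflexivity|contradiction]. Qed.

Lemma test_coef_out S w v T k : ~ In k S -> test_coef S w v T k = (0, 0).
Proof. intro Hk. unfold test_coef. destruct (in_dec _ k S); [contradiction|reflexivity]. Qed.

Section Duality.

Variables (S : list (list Z)) (w v : list Z -> R).
Hypothesis Hw : forall k, In k S -> 0 < w k.
Let T := lsum (fun k => v k ^ 2 / w k) S.
Hypothesis HT : 0 < T.

Lemma test_coef_norm : lsum (fun k => w k * Cnorm2 (test_coef S w v T k)) S = 1.
Proof.
  assert (Hs : sqrt T * sqrt T = T) by (apply sqrt_sqrt; lra).
  assert (0 < sqrt T) by (apply sqrt_lt_R0; lra).
  rewrite (lsum_ext_in _ (fun k => v k ^ 2 / w k * / T)).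
  - rewrite lsum_scal. fold T. field. lra.
  - intros k Hk. rewrite test_coef_in by exact Hk. unfold Cnorm2; simpl.
    specialize (Hw k Hk). replace (/ T) with (/ (sqrt T * sqrt T)) by (rewrite Hs; reflexivity).
    field. lra.
Qed.

Lemma test_coef_pairing :
  lsum (fun k => fst (test_coef S w v T k) * v k) S = sqrt T /\
  lsum (fun k => snd (test_coef S w v T k) * v k) S = 0.
Proof.
  assert (Hs : sqrt T * sqrt T = T) by (apply sqrt_sqrt; lra).
  assert (0 < sqrt T) by (apply sqrt_lt_R0; lra).
  split.
  - rewrite (lsum_ext_in _ (fun k => v k ^ 2 / w k * / sqrt T)).
    + rewrite lsum_scal. fold T. rewrite <- Hs at 1. field. lra.
    + intros k Hk. rewrite test_coef_in by exact Hk. simpl.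
      specialize (Hw k Hk). field. lra.
  - rewrite (lsum_ext_in _ (fun _ => 0)); [apply lsum_zero|].
    intros k Hk. rewrite test_coef_in by exact Hk. simpl. ring.
Qed.

End Duality.

Lemma sqrt_linear_unbounded (T : nat -> R) c : 0 < c ->
  (forall n, INR (S n) * c <= T n) ->
  forall M, exists n0, forall n, (n0 <= n)%nat -> M <= sqrt (T n).
Proof.
  intros Hc HT M. destruct (Rle_or_lt M 0) as [HM|HM].
  { exists O. intros n _. pose proof (sqrt_pos (T n)). lra. }
  destruct (archimed (M * M / c)) as [Hup _].
  exists (Z.to_nat (up (M * M / c))). intros n Hn.
  rewrite <- (sqrt_square M) by lra. apply sqrt_le_1_alt.
  assert (Hz : IZR (up (M * M / c)) <= INR n).
  { apply le_INR in Hn. rewrite INR_IZR_INZ, Z2Nat.id in Hn; [lra|].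
    apply le_IZR. assert (0 <= M * M / c) by (apply Rdiv_le_0_compat; nra). lra. }
  specialize (HT n). rewrite S_INR in HT.
  assert (M * M < (INR n + 1) * c).
  { apply (Rmult_lt_reg_r (/ c)); [apply Rinv_0_lt_compat; lra|].
    replace ((INR n + 1) * c * / c) with (INR n + 1) by (field; lra). unfold Rdiv in Hup. lra. }
  lra.
Qed.

Lemma first_coord_nonzero N alpha : (2 <= N)%nat -> length alpha = N ->
  (forall k, dotZN N k -> dotZ alpha k <> 0) ->
  exists b al dim, alpha = b :: al /\ N = S dim /\ (1 <= dim)%nat /\ b <> 0.
Proof.
  intros HN Hlen Halpha.
  destruct alpha as [|b al]; [simpl in Hlen; lia|]. destruct N as [|dim]; [lia|].
  exists b, al, dim. repeat split; [lia|]. intro Hb0.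
  apply (Halpha (1%Z :: repeat 0%Z dim)).
  - split; [simpl; rewrite repeat_length; reflexivity|intro H; inversion H].
  - rewrite dotZ_cons, dotZ_repeat0, Hb0. ring.
Qed.

Theorem lemma5p2 (N : nat) (alpha : list R) (a : R) (sigma : list R)
  (HN : (2 <= N)%nat)
  (Halen : length alpha = N)
  (Halpha : forall k : list Z, dotZN N k -> dotZ alpha k <> 0)
  (Hslen : length sigma = N)
  (Hsig_nonneg : forall j : nat, (j < N)%nat -> 0 <= nth j sigma 0)
  (Hsig_sum : lsum (fun s => s) sigma <= (INR N - 1) / 2) :
  exists (f : nat -> list Z -> Cplx) (S : nat -> list (list Z)) (phi : R -> R),
    smooth phi /\ compact_support phi /\
    (forall n, NoDup (S n) /\ (forall k, In k (S n) -> dotZN N k)) /\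
    (forall n k, ~ In k (S n) -> f n k = (0, 0)) /\
    (exists B : R, forall n, Gnorm2 alpha sigma a (S n) (f n) <= B) /\
    (forall M : R, exists n0 : nat, forall n, (n0 <= n)%nat ->
        snd (pairing alpha (S n) (f n) phi) = 0 /\
        M <= fst (pairing alpha (S n) (f n) phi)).
Proof.
  destruct (first_coord_nonzero N alpha HN Halen Halpha) as (b & al & dim & -> & -> & Hdim & Hb).
  assert (Hsig : forall s, In s sigma -> 0 <= s).
  { intros s Hs. destruct (In_nth _ _ 0 Hs) as [j [Hj <-]]. apply Hsig_nonneg. lia. }
  rewrite S_INR, Rplus_minus_r in Hsig_sum.
  set (phi := test_bump b). set (w := lattice_weight (b :: al) sigma a).
  set (T := fun n => dual_mass (b :: al) sigma a phi (test_points b al dim n)).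
  destruct (dual_mass_lower_bound b al dim a sigma Hb Hslen Hsig Hsig_sum) as [c [Hc HT]].
  assert (HTpos : forall n, 0 < T n).
  { intro n. apply Rlt_le_trans with (INR (S n) * c); [|exact (HT n)].
    apply Rmult_lt_0_compat; [apply lt_0_INR; lia|exact Hc]. }
  set (v := fun k => phi (dotZ (b :: al) k)).
  exists (fun n => test_coef (test_points b al dim n) w v (T n)), (test_points b al dim), phi.
  assert (Hw : forall n k, In k (test_points b al dim n) -> 0 < w k)
    by (intros; apply lattice_weight_pos).
  split; [apply scaled_bump_smooth; pose proof (Rabs_pos_lt b Hb); lra|].
  split; [apply scaled_bump_support; pose proof (Rabs_pos_lt b Hb); lra|].
  split; [intro n; split; [apply test_points_nodup|intro k; apply test_points_nonzero]; auto|].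
  split; [intros n k; apply test_coef_out|].
  split; [exists 1; intro n; right; apply (test_coef_norm _ w v (Hw n) (HTpos n))|].
  intro M. destruct (sqrt_linear_unbounded T c Hc HT M) as [n0 Hn0].
  exists n0. intros n Hn. destruct (test_coef_pairing _ w v (Hw n) (HTpos n)) as [Hre Him].
  unfold pairing; simpl. split; [exact Him|].
  eapply Rle_trans; [apply Hn0, Hn|right; symmetry; exact Hre].
Qed.
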